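(* Let $A=(a_{ij})$ be a $3\times3$ Cartan matrix of infinite type whose principal submatrix $A_{12}$ is also of infinite type (i.e. $a_{12}a_{21}\ge 4$). Let $$\kappa=a_{12}\omega_1^2+a_{12}a_{21}\omega_1\omega_2+a_{21}\omega_2^2+a_{12}a_{31}\omega_1\omega_3+a_{21}a_{32}\omega_2\omega_3.$$ Then $\mathbb{Q}[\omega_1,\omega_2,\omega_3]^{\langle\sigma_1,\sigma_2\rangle}=\mathbb{Q}[\kappa,\omega_3]$.
   Context: A $3\times 3$ (generalized) Cartan matrix $A=(a_{ij})$ is an integer matrix with $a_{ii}=2$, $a_{ij}\le 0$ for $i\ne j$, $a_{ij}=0\iff a_{ji}=0$; infinite type means indecomposable and not of finite type. $\omega_1,\omega_2,\omega_3$ have degree 2 ($\mathbb{Q}[\omega_1,\omega_2,\omega_3]=H^*(BT;\mathbb{Q})$), $\alpha_j=\sum_i a_{ij}\omega_i$, and $\sigma_j(\omega_j)=\omega_j-\alpha_j$, $\sigma_j(\omega_i)=\omega_i$ for $i\ne j$. *)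

From HB Require Import structures.
From mathcomp Require Import all_boot all_order all_algebra.
From mathcomp Require Import mpoly.
Set Implicit Arguments. Unset Strict Implicit. Unset Printing Implicit Defensive.
Import Order.TTheory GRing.Theory Num.Theory.
Local Open Scope ring_scope.

(* Indices are 0-based: omega_1, omega_2, omega_3 are 'X_0, 'X_1, 'X_2 and
   a_ij is A (i-1) (j-1). *)

Definition is_cartan (A : 'M[int]_3) : Prop :=
  (forall i, A i i = 2) /\
  (forall i j, i != j -> A i j <= 0) /\
  (forall i j, (A i j == 0) = (A j i == 0)).

Definition indecomposable (A : 'M[int]_3) : Prop :=
  forall S : {set 'I_3}, S != set0 -> S != setT ->
    exists i, exists j, [/\ i \in S, j \notin S & A i j != 0].

Definition principal_minor (A : 'M[int]_3) (S : {set 'I_3}) : int :=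
  \det (\matrix_(i < #|S|, j < #|S|) A (enum_val i) (enum_val j)).

(* finite type: all principal minors positive (Kac, Thm 4.3 / Lemma 4.5) *)
Definition finite_type (A : 'M[int]_3) : Prop :=
  forall S : {set 'I_3}, S != set0 -> 0 < principal_minor A S.

Definition infinite_type (A : 'M[int]_3) : Prop :=
  indecomposable A /\ ~ finite_type A.

Definition omega (i : 'I_3) : {mpoly rat[3]} := 'X_i.

Definition alpha (A : 'M[int]_3) (j : 'I_3) : {mpoly rat[3]} :=
  \sum_(i < 3) (A i j)%:~R *: omega i.

Definition sigma (A : 'M[int]_3) (j : 'I_3) (p : {mpoly rat[3]}) : {mpoly rat[3]} :=
  p \mPo [tuple (if i == j then omega j - alpha A j else omega i) | i < 3].

(* action of a word in the generators sigma_1, sigma_2 (letters 0, 1 of 'I_2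
   stand for sigma_1, sigma_2).  Since sigma_j is an involution, every element
   of the group <sigma_1, sigma_2> is such a word. *)
Definition act_word (A : 'M[int]_3) (w : seq 'I_2) (p : {mpoly rat[3]}) :=
  foldr (fun j q => sigma A (widen_ord (leqnSn 2) j) q) p w.

Definition invariant12 (A : 'M[int]_3) (p : {mpoly rat[3]}) : Prop :=
  forall w : seq 'I_2, act_word A w p = p.

Definition kappa (A : 'M[int]_3) : {mpoly rat[3]} :=
  let a i j : rat := (A i j)%:~R in
  let w := omega in
  a 0 1 *: (w 0 ^+ 2) + (a 0 1 * a 1 0) *: (w 0 * w 1) + a 1 0 *: (w 1 ^+ 2)
  + (a 0 1 * a 2 0) *: (w 0 * w 2) + (a 1 0 * a 2 1) *: (w 1 * w 2).

From HB Require Import structures.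
From mathcomp Require Import all_boot all_order all_algebra.
From mathcomp Require Import mpoly.
From mathcomp Require Import ring lra.
Set Implicit Arguments. Unset Strict Implicit. Unset Printing Implicit Defensive.
Import Order.TTheory Order.NatMonotonyTheory GRing.Theory Num.Theory.
Local Open Scope ring_scope.

(* Since a12 <> 0, the identity
     κ = a12 ω1² + a12 ω1 (a21 ω2 + a31 ω3) + a21 ω2 (ω2 + a32 ω3)
   expresses ω1², hence every polynomial, as F(ω2, ω3, κ) + ω1 G(ω2, ω3, κ).
   σ1 fixes ω2, ω3 and κ and sends ω1 to ω1 - α1 with α1 <> 0, so for a
   σ1-invariant p the second part vanishes.  Since (σ1 σ2)^n fixes ω3 and κ,
   p = F(l_n, ω3, κ) for every l_n = (σ1 σ2)^n ω2.  The ω1-coefficient x_n of l_n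
   satisfies x_(n+2) = (a12 a21 - 2) x_(n+1) - x_n with x_0 = 0 and x_1 = a12 < 0,
   so for a12 a21 >= 4 it is strictly decreasing and the l_n are pairwise distinct.
   A polynomial in one variable over Q[ω1, ω2, ω3] taking the value p at infinitely
   many points is constant, so p = F(0, ω3, κ). *)

Lemma mktuple3 (T : Type) (f : 'I_3 -> T) : [tuple f i | i < 3] = [tuple f 0; f 1; f 2].
Proof.
apply: eq_from_tnth => -[[|[|[|//]]] ?]; rewrite tnth_mktuple //=.
all: by congr f; apply/val_inj.
Qed.

Lemma ord3_neq2 (j : 'I_3) : j != 2 -> j = 0 \/ j = 1.
Proof. by case: j => -[|[|[|//]]] ? //= _; [left | right]; apply/val_inj. Qed.

Lemma rmorph_mmap n (R S S' : nzRingType) (g : {rmorphism S -> S'}) (f : R -> S) h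
    (p : {mpoly R[n]}) :
  g (mmap f h p) = mmap (g \o f) (g \o h) p.
Proof.
rewrite /mmap rmorph_sum; apply: eq_bigr => m _.
rewrite rmorphM rmorph_prod; congr (_ * _); apply: eq_bigr => i _.
exact: rmorphXn.
Qed.

Lemma eq_mmap n (R S : nzRingType) (f f' : R -> S) h h' (p : {mpoly R[n]}) :
  f =1 f' -> h =1 h' -> mmap f h p = mmap f' h' p.
Proof.
move=> eq_f eq_h; apply: eq_bigr => m _; rewrite eq_f; congr (_ * _).
exact: mmap1_eq.
Qed.

Lemma comp_mpolyA n k l (R : comNzRingType) (p : {mpoly R[n]})
    (t : n.-tuple {mpoly R[k]}) (s : k.-tuple {mpoly R[l]}) :
  (p \mPo t) \mPo s = p \mPo [tuple tnth t i \mPo s | i < n].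
Proof.
rewrite {1}/comp_mpoly rmorph_mmap; apply: eq_mmap => [c|i] /=.
  exact: comp_mpolyC.
by rewrite tnth_mktuple.
Qed.

Lemma mpolyX3E (R : nzRingType) (m : 'X_{1..3}) :
  'X_[m] = 'X_0 ^+ m 0 * 'X_1 ^+ m 1 * 'X_2 ^+ m 2 :> {mpoly R[3]}.
Proof.
rewrite mpolyXE_id !big_ord_recl big_ord0 mulr1 mulrA.
by congr (_ * _ * _); congr ('X_ _ ^+ m _); apply/val_inj.
Qed.

Definition linform n (R : nzRingType) (c : 'I_n -> R) : {mpoly R[n]} :=
  \sum_i c i *: 'X_i.

Lemma linform3E (R : nzRingType) (c : 'I_3 -> R) :
  linform c = c 0 *: 'X_0 + c 1 *: 'X_1 + c 2 *: 'X_2.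
Proof.
rewrite /linform !big_ord_recl big_ord0 addr0 addrA.
by congr (_ + _ + _); congr (c _ *: 'X_ _); apply/val_inj.
Qed.

Lemma linform_delta n (R : nzRingType) (k : 'I_n) :
  linform (fun i => (i == k)%:R) = 'X_k :> {mpoly R[n]}.
Proof.
rewrite /linform (bigD1 k) //= eqxx scale1r big1 ?addr0 // => i /negbTE ->.
exact: scale0r.
Qed.

Lemma mcoeff_linform n (R : nzRingType) (c : 'I_n -> R) (i : 'I_n) :
  (linform c)@_U_(i) = c i.
Proof.
rewrite /linform raddf_sum (bigD1 i) //= mcoeffZ mcoeffXU eqxx mulr1 big1 ?addr0 //.
by move=> j /negbTE ji; rewrite mcoeffZ mcoeffXU ji mulr0.
Qed.

Lemma polyC_of_inj_horner (S : idomainType) (P : {poly S}) (c : S) (l : nat -> S) :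
  injective l -> (forall n, P.[l n] = c) -> P = c%:P.
Proof.
move=> l_inj Pl; apply/eqP; rewrite -subr_eq0; apply/negPn/negP => PC_neq0.
pose rs := [seq l n | n <- iota 0 (size (P - c%:P))].
have rs_roots : all (root (P - c%:P)) rs.
  by apply/allP => _ /mapP [n _ ->]; rewrite /root !hornerE Pl subrr.
have rs_uniq : uniq rs by rewrite map_inj_uniq // iota_uniq.
by have := max_poly_roots PC_neq0 rs_roots rs_uniq; rewrite size_map size_iota ltnn.
Qed.

Lemma recurrence_decreasing (R : realDomainType) (t : R) (x : nat -> R) :
  2 <= t -> x 1%N <= 0 -> x 1%N < x 0%N -> (forall n, x n.+2 = t * x n.+1 - x n) ->
  forall n, x n.+1 < x n.
Proof.
move=> t_ge2 x1_le0 x10 xrec.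
suff dec_nonpos : forall n, x n.+1 <= 0 /\ x n.+1 < x n.
  by move=> n; case: (dec_nonpos n).
elim=> [|n [xn1_le0 xn_dec]]; first by [].
have step : x n.+2 - x n.+1 = (t - 2) * x n.+1 + (x n.+1 - x n) by rewrite xrec; ring.
have : (t - 2) * x n.+1 <= 0 by rewrite mulr_ge0_le0 // subr_ge0.
by move: step; set u := (t - 2) * _ => step; split; lra.
Qed.

Section X0Affine.
Variables (R : comNzRingType) (K : {mpoly R[3]}).

Local Notation T := [tuple 'X_1; 'X_2; K].

Definition X0_affine (p : {mpoly R[3]}) :=
  exists F G : {mpoly R[3]}, p = F \mPo T + 'X_0 * (G \mPo T).

Lemma X0_affine_comp F : X0_affine (F \mPo T).
Proof. by exists F, 0; rewrite comp_mpoly0 mulr0 addr0. Qed.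

Lemma X0_affineD p q : X0_affine p -> X0_affine q -> X0_affine (p + q).
Proof.
move=> [F [G ->]] [F' [G' ->]]; exists (F + F'), (G + G').
by rewrite !rmorphD /=; ring.
Qed.

Lemma X0_affineZ c p : X0_affine p -> X0_affine (c *: p).
Proof.
move=> [F [G ->]]; exists (c *: F), (c *: G).
by rewrite !comp_mpolyZ scalerDr scalerAr.
Qed.

Hypothesis X0_sq_affine : X0_affine ('X_0 ^+ 2).

Lemma X0_affine_mulX0 p : X0_affine p -> X0_affine ('X_0 * p).
Proof.
have [L [M X0_sq]] := X0_sq_affine.
move=> [F [G ->]]; exists (L * G), (F + M * G).
have -> : 'X_0 * (F \mPo T + 'X_0 * (G \mPo T)) =
    'X_0 * (F \mPo T) + 'X_0 ^+ 2 * (G \mPo T) by ring.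
by rewrite X0_sq !rmorphD !rmorphM /=; ring.
Qed.

Lemma X0_affine_all p : X0_affine p.
Proof.
elim/mpolyind: p => [|c m p _ _ p_aff].
  by have := X0_affine_comp 0; rewrite comp_mpoly0.
apply: X0_affineD p_aff; apply: X0_affineZ.
have -> : 'X_[m] = 'X_0 ^+ m 0 * (('X_0 ^+ m 1 * 'X_1 ^+ m 2) \mPo T).
  by rewrite mpolyX3E rmorphM !rmorphXn /= !comp_mpolyXU /= mulrA.
elim: (m 0) => [|k IHk]; first by rewrite mul1r; exact: X0_affine_comp.
by rewrite exprS -mulrA; exact: X0_affine_mulX0.
Qed.

End X0Affine.

Section FixedByShift.
Variables (R : idomainType) (K : {mpoly R[3]}).

Local Notation T := [tuple 'X_1; 'X_2; K].

Lemma X0_coef_eq0_of_shift_fixed (s : 3.-tuple {mpoly R[3]}) (alpha F G : {mpoly R[3]}) :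
  alpha != 0 -> 'X_0 \mPo s = 'X_0 - alpha -> (forall i, tnth T i \mPo s = tnth T i) ->
  let p := F \mPo T + 'X_0 * (G \mPo T) in p \mPo s = p -> G \mPo T = 0.
Proof.
move=> alpha_neq0 sX0 sT p; have sF H : (H \mPo T) \mPo s = H \mPo T.
  rewrite comp_mpolyA; congr comp_mpoly; apply: eq_from_tnth => i.
  by rewrite tnth_mktuple sT.
rewrite /p rmorphD rmorphM /= !sF sX0 => /eqP.
rewrite -subr_eq0 (_ : _ - _ = - (alpha * (G \mPo T))); last by ring.
by rewrite oppr_eq0 mulf_eq0 (negbTE alpha_neq0) => /eqP.
Qed.

End FixedByShift.

Section FirstVariable.
Variables (R : idomainType) (Z K : {mpoly R[3]}).

Lemma comp_mpoly_horner F :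
  exists P : {poly {mpoly R[3]}}, forall v, P.[v] = F \mPo [tuple v; Z; K].
Proof.
exists (mmap (fun c : R => c%:MP%:P) (tnth [tuple 'X; Z%:P; K%:P]) F) => v.
rewrite -horner_evalE rmorph_mmap; apply: eq_mmap => [c|i] /=.
  by rewrite horner_evalE hornerC.
by rewrite horner_evalE; case: i => -[|[|[|//]]] ? /=; rewrite ?hornerX ?hornerC.
Qed.

Lemma comp_mpoly_const_first F p (l : nat -> {mpoly R[3]}) : injective l ->
  (forall n, F \mPo [tuple l n; Z; K] = p) -> p = F \mPo [tuple 0; Z; K].
Proof.
move=> l_inj Fl; have [P PE] := comp_mpoly_horner F.
have /(congr1 (horner^~ 0)) : P = p%:P.
  by apply: (polyC_of_inj_horner l_inj) => n; rewrite PE.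
by rewrite PE hornerC.
Qed.

End FirstVariable.

Section CartanReflections.
Variable A : 'M[int]_3.
Hypothesis A_diag : forall i, A i i = 2.
Hypothesis A01_le0 : A 0 1 <= 0.
Hypothesis A01A10_ge4 : 4 <= A 0 1 * A 1 0.

Definition sigma_coef (j : 'I_3) (c : 'I_3 -> rat) : 'I_3 -> rat :=
  fun i => c i - c j * (A i j)%:~R.

Lemma sigmaX j i : sigma A j 'X_i = 'X_i - (i == j)%:R *: alpha A j.
Proof.
rewrite /sigma comp_mpolyXU -tnth_nth tnth_mktuple.
by case: eqP => [->|_]; rewrite ?scale1r ?scale0r ?subr0.
Qed.

Lemma sigma_linform j c : sigma A j (linform c) = linform (sigma_coef j c).
Proof.
rewrite /sigma raddf_sum /=.
under eq_bigr do rewrite comp_mpolyZ -/(sigma A j _) sigmaX scalerBr scalerA.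
rewrite sumrB -scaler_suml.
have -> : \sum_i c i * (i == j)%:R = c j.
  rewrite (bigD1 j) //= eqxx mulr1 big1 ?addr0 // => i /negbTE ->.
  exact: mulr0.
rewrite /alpha /omega scaler_sumr -sumrB.
by apply: eq_bigr => i _; rewrite scalerA -scalerBl.
Qed.

Lemma alpha_neq0 j : alpha A j != 0.
Proof.
apply/eqP => /(congr1 (mcoeff U_(j))); rewrite mcoeff0.
by rewrite [alpha A j]/alpha /omega -/(linform _) mcoeff_linform A_diag.
Qed.

Lemma sigma_kappa j : j != 2 -> sigma A j (kappa A) = kappa A.
Proof.
move=> /ord3_neq2 j01.
rewrite /kappa /omega -!mul_mpolyC /sigma !(rmorphD, rmorphM, rmorphXn) /= !comp_mpolyC.
rewrite -!/(sigma A _ _) !sigmaX /alpha /omega -/(linform _) linform3E -!mul_mpolyC.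
by case: j01 => ->; rewrite /= A_diag; ring.
Qed.

Lemma act_word_comp n w (q : {mpoly rat[n]}) (t : n.-tuple {mpoly rat[3]}) :
  act_word A w (q \mPo t) = q \mPo [tuple act_word A w (tnth t i) | i < n].
Proof.
elim: w => [|j w IHw] /=.
  by congr comp_mpoly; apply: eq_from_tnth => i; rewrite tnth_mktuple.
rewrite IHw /sigma comp_mpolyA; congr comp_mpoly; apply: eq_from_tnth => i.
by rewrite !tnth_mktuple.
Qed.

Lemma invariant12P p : invariant12 A p <-> forall j, j != 2 -> sigma A j p = p.
Proof.
split=> [p_inv j /ord3_neq2 [->|->] | fix_p].
- by have := p_inv [:: ord0]; congr (sigma A _ _ = _); apply/val_inj.
- by have := p_inv [:: ord_max]; congr (sigma A _ _ = _); apply/val_inj.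
by elim=> [|j w IHw] //=; rewrite IHw fix_p //; case: j => -[|[|]].
Qed.

Lemma invariant12_comp n (q : {mpoly rat[n]}) (t : n.-tuple {mpoly rat[3]}) :
  (forall i, invariant12 A (tnth t i)) -> invariant12 A (q \mPo t).
Proof.
move=> t_inv w; rewrite act_word_comp; congr comp_mpoly.
by apply: eq_from_tnth => i; rewrite tnth_mktuple t_inv.
Qed.

Lemma invariant12_X2 : invariant12 A 'X_2.
Proof.
apply/invariant12P => j; rewrite sigmaX eq_sym => /negbTE ->.
by rewrite scale0r subr0.
Qed.

Lemma invariant12_kappa : invariant12 A (kappa A).
Proof. by apply/invariant12P; exact: sigma_kappa. Qed.

Lemma A01_neq0 : A 0 1 != 0.
Proof. by apply: contraTneq A01A10_ge4 => ->; rewrite mul0r. Qed.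

Lemma kappa_X0_sq : X0_affine (kappa A) ('X_0 ^+ 2).
Proof.
have a_neq0 : (A 0 1)%:~R != 0 :> rat by rewrite intr_eq0 A01_neq0.
exists ((A 0 1)%:~R^-1 *:
  ('X_2 - (A 1 0)%:~R *: ('X_0 * ('X_0 + (A 2 1)%:~R *: 'X_1)))).
exists (- ((A 1 0)%:~R *: 'X_0 + (A 2 0)%:~R *: 'X_1)).
apply: (scalerI a_neq0); rewrite scalerDr comp_mpolyZ scalerA mulfV // scale1r.
rewrite -!mul_mpolyC !(rmorphD, rmorphN, rmorphM) /= !comp_mpolyC !comp_mpolyXU /=.
by rewrite /kappa /omega -!mul_mpolyC; ring.
Qed.

Lemma sigma0_fixed_X0_coef_eq0 F G :
  let p := F \mPo [tuple 'X_1; 'X_2; kappa A]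
           + 'X_0 * (G \mPo [tuple 'X_1; 'X_2; kappa A]) in
  sigma A 0 p = p -> G \mPo [tuple 'X_1; 'X_2; kappa A] = 0.
Proof.
apply: (X0_coef_eq0_of_shift_fixed (alpha_neq0 0)).
  by rewrite -/(sigma A 0 _) sigmaX eqxx scale1r.
move=> i; rewrite (tnth_nth 0) -/(sigma A 0 _).
case: i => -[|[|[|//]]] ? /=; rewrite ?sigmaX ?scale0r ?subr0 //.
exact: sigma_kappa.
Qed.

Definition coxeter_word n : seq 'I_2 := flatten (nseq n [:: ord0; ord_max]).

Definition coxeter_coef (c : 'I_3 -> rat) : 'I_3 -> rat :=
  sigma_coef 0 (sigma_coef 1 c).

Lemma act_coxeter_word n c :
  act_word A (coxeter_word n) (linform c) = linform (iter n coxeter_coef c).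
Proof.
elim: n => [|n IHn] //=; rewrite IHn !sigma_linform.
by congr (linform (sigma_coef _ (sigma_coef _ _))); apply/val_inj.
Qed.

Lemma coxeter_coef_recurrence c :
  coxeter_coef (coxeter_coef c) 0 =
    ((A 0 1 * A 1 0)%:~R - 2) * coxeter_coef c 0 - c 0.
Proof. by rewrite /coxeter_coef /sigma_coef !A_diag intrM; ring. Qed.

Lemma coxeter_orbit_inj : injective (fun n => act_word A (coxeter_word n) 'X_1).
Proof.
pose x n := iter n coxeter_coef (fun i => (i == 1)%:R) 0.
have x_dec : forall n, x n.+1 < x n.
  have ab_ge4 : 4 <= (A 0 1 * A 1 0)%:~R :> rat by rewrite (ler_int rat 4).
  have a_lt0 : (A 0 1)%:~R < 0 :> rat.
    by rewrite (ltr_int rat _ 0) lt_neqAle A01_le0 A01_neq0.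
  apply: (recurrence_decreasing (t := (A 0 1 * A 1 0)%:~R - 2)) => [||| n].
  - by lra.
  - rewrite /x /= /coxeter_coef /sigma_coef /= !A_diag; lra.
  - rewrite /x /= /coxeter_coef /sigma_coef /= !A_diag; lra.
  - exact: coxeter_coef_recurrence.
move=> m n /=; rewrite -(linform_delta rat (1 : 'I_3)) !act_coxeter_word.
move=> /(congr1 (mcoeff U_(0 : 'I_3))); rewrite !mcoeff_linform -/(x m) -/(x n).
move=> xmn; case: (ltngtP m n) => // /(nhomo_ltn_lt x_dec).
  by rewrite xmn ltxx.
by rewrite xmn ltxx.
Qed.

End CartanReflections.

Theorem lemma7p3 (A : 'M[int]_3) :
  is_cartan A -> infinite_type A -> 4 <= A 0 1 * A 1 0 ->
  forall p : {mpoly rat[3]},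
    invariant12 A p <->
    exists q : {mpoly rat[2]}, p = q \mPo [tuple kappa A; omega 2].
Proof.
move=> [A_diag [A_offdiag _]] _ ab_ge4 p; have a_le0 := A_offdiag 0 1 isT.
split=> [p_inv | [q ->]]; last first.
  apply: invariant12_comp => -[[|[|//]] ?].
  - exact: invariant12_kappa A_diag.
  - exact: invariant12_X2.
have [F [G p_split]] := X0_affine_all (kappa_X0_sq ab_ge4) p.
have := (invariant12P A p).1 p_inv 0 isT; rewrite {1 2}p_split.
move=> /(sigma0_fixed_X0_coef_eq0 A_diag) G0.
rewrite G0 mulr0 addr0 in p_split.
have orbit n : F \mPo [tuple act_word A (coxeter_word n) 'X_1; 'X_2; kappa A] = p.
  rewrite -(p_inv (coxeter_word n)) p_split act_word_comp mktuple3 /=.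
  by rewrite invariant12_X2 (invariant12_kappa A_diag).
exists (F \mPo [tuple 0; 'X_1; 'X_0]).
rewrite (comp_mpoly_const_first (coxeter_orbit_inj A_diag a_le0 ab_ge4) orbit).
by rewrite comp_mpolyA mktuple3 /= comp_mpoly0 !comp_mpolyXU.
Qed.
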